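(* Let $\mathcal{X}=\langle P,K,V\rangle$ be a polyhedral model, $x\in P$, and $\sigma\in K$ the unique simplex with $x\in\tilde\sigma$. For every SLCS formula $\phi$: $\mathcal{X},x\models\phi$ if and only if $\mathcal{M}(\mathcal{X}),\tilde\sigma\models\phi$.
   Context: A $d$-simplex $\sigma\subseteq\mathbb{R}^m$ is the convex hull of $d+1$ affinely independent points $v_0,\dots,v_d$ (its vertices); the simplexes spanned by subsets of the vertices (including the empty simplex) are its faces, and $\tau\preceq\sigma$ means $\tau$ is a face of $\sigma$. The relative interior of $\sigma$ is $\tilde\sigma=\{\sum_i\lambda_iv_i:\lambda_i\in(0,1],\sum_i\lambda_i=1\}$. A simplicial complex $K$ is a finite set of simplexes of $\mathbb{R}^m$ closed under taking faces and such that the intersection of any two of its simplexes is a face of both. Its polyhedron is $|K|=\bigcup K$, with the subspace topology of $\mathbb{R}^m$; $\mathcal{C}$ and $\mathcal{I}$ denote closure and interior in this space. The cells of $K$ are the sets $\tilde\sigma$ for nonempty $\sigma\in K$; they form a partition $\tilde K$ of $|K|$. A path in a space $P$ is a continuous $\pi:[0,1]\to P$; $\pi(S)=\{\pi(s):s\in S\}$. Fix a finite set $AP$ of atomic propositions. A polyhedral model is $\mathcal{X}=\langle P,K,V\rangle$ with $K$ a simplicial complex, $P=|K|$, and $V:AP\to\mathcal{P}(P)$ such that each $V(p)$ is a union of cells of $K$ ($K$ is then called coherent with the model). SLCS formulas: $\phi::=\top\mid p\mid\neg\phi\mid\phi\wedge\phi\mid\Box\phi\mid\gamma(\phi,\phi)$,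 $p\in AP$. Semantics at $x\in P$, with $[\![\phi]\!]=\{x\in P:\mathcal{X},x\models\phi\}$: $\top$ always holds; $x\models p$ iff $x\in V(p)$; Boolean connectives as usual; $x\models\Box\phi$ iff $x\in\mathcal{I}([\![\phi]\!])$; $x\models\gamma(\phi,\psi)$ iff there is a path $\pi$ in $P$ with $\pi(0)=x$, $\pi((0,1))\subseteq[\![\phi]\!]$ and $\pi(1)\in[\![\psi]\!]$. The finite Kripke model $\mathcal{M}(\mathcal{X})$ has as states the cells of $K$, accessibility relation $\tilde\sigma\,\tilde\preceq\,\tilde\tau$ iff $\sigma\preceq\tau$, and valuation $V_M(p)=\{\tilde\sigma:\tilde\sigma\subseteq V(p)\}$. A $\pm$-path in $\mathcal{M}(\mathcal{X})$ is a map $\pi:\{0,\dots,k\}\to\tilde K$ with $k\ge2$ such that $\pi(0)\,\tilde\preceq\,\pi(1)$, $\pi(k)\,\tilde\preceq\,\pi(k-1)$, and for each $i<k$ either $\pi(i)\,\tilde\preceq\,\pi(i+1)$ or $\pi(i+1)\,\tilde\preceq\,\pi(i)$. Satisfaction in $\mathcal{M}(\mathcal{X})$ at a cell $\tilde\sigma$, with $[\![\phi]\!]_M$ the set of satisfying cells: $\top$ always; $p$ iff $\tilde\sigma\in V_M(p)$; Booleans as usual; $\tilde\sigma\models\Box\phi$ iff every $\tilde\tau$ with $\tilde\sigma\,\tilde\preceq\,\tilde\tau$ satisfies $\phi$; $\tilde\sigma\models\gamma(\phi,\psi)$ iff there is a $\pm$-path $\pi:\{0,\dots,k\}\to\tilde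 K$ with $\pi(0)=\tilde\sigma$, $\pi(\{1,\dots,k-1\})\subseteq[\![\phi]\!]_M$ and $\pi(k)\in[\![\psi]\!]_M$. *)

(* Points of R^m are row vectors 'rV[R]_m
   (with the library's canonical topology on matrices, the product topology,
   which coincides with the Euclidean one). *)
From mathcomp Require Import all_boot all_algebra all_classical all_reals all_analysis.
From mathcomp Require Import finmap.
Import numFieldNormedType.Exports.
Set Implicit Arguments. Unset Strict Implicit. Unset Printing Implicit Defensive.
Local Open Scope classical_set_scope.
Local Open Scope ring_scope.

Section Polyhedra.
Variables (R : realType) (m : nat).
Local Notation pt := 'rV[R]_m.

(* A simplex is represented by its (finite) set of vertices. *)
Definition aff_indep (V : {fset pt}) : Prop :=
  forall l : pt -> R,
    \sum_(v <- V) l v = 0 -> \sum_(v <- V) l v *: v = 0 ->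
    forall v, v \in V -> l v = 0.

Definition hull (V : {fset pt}) : set pt :=
  [set x | exists l : pt -> R,
     (forall v, v \in V -> 0 <= l v) /\ \sum_(v <- V) l v = 1 /\
     x = \sum_(v <- V) l v *: v].

Definition relint (V : {fset pt}) : set pt :=
  [set x | exists l : pt -> R,
     (forall v, v \in V -> 0 < l v <= 1) /\ \sum_(v <- V) l v = 1 /\
     x = \sum_(v <- V) l v *: v].

Definition face (tau sigma : {fset pt}) : Prop := (tau `<=` sigma)%fset.

Definition simplicial_complex (K : {fset {fset pt}}) : Prop :=
  (forall s, s \in K -> aff_indep s) /\
  (forall s t, s \in K -> face t s -> t \in K) /\
  (forall s t, s \in K -> t \in K ->
     exists W1 W2, face W1 s /\ face W2 t /\
       hull W1 = hull s `&` hull t /\ hull W2 = hull s `&` hull t).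

Definition polyhedron (K : {fset {fset pt}}) : set pt :=
  [set x | exists2 s, s \in K & hull s x].

(* cells are relative interiors of nonempty simplexes of K *)
Definition is_cell_of (K : {fset {fset pt}}) (s : {fset pt}) : Prop :=
  s \in K /\ s != fset0.

Definition coherent (AP : Type) (K : {fset {fset pt}}) (V : AP -> set pt) : Prop :=
  forall p, exists C : set {fset pt},
    (forall s, C s -> is_cell_of K s) /\
    V p = \bigcup_(s in C) relint s.

End Polyhedra.

Inductive slcs (AP : Type) : Type :=
  | FTop
  | FAtom of AP
  | FNeg of slcs AP
  | FAnd of slcs AP & slcs AP
  | FBox of slcs AP
  | FGamma of slcs AP & slcs AP.
Arguments FTop {AP}.

Section Semantics.
Variables (R : realType) (m : nat) (AP : Type).
Local Notation pt := 'rV[R]_m.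
Variables (K : {fset {fset pt}}) (V : AP -> set pt).
Local Notation P := (polyhedron K).

Definition sinterior (S : set pt) : set pt :=
  [set x | exists U : set pt, open U /\ U x /\ U `&` P `<=` S].

Fixpoint sat (f : slcs AP) (x : pt) : Prop :=
  match f with
  | FTop => True
  | FAtom p => V p x
  | FNeg g => ~ sat g x
  | FAnd g h => sat g x /\ sat h x
  | FBox g => sinterior (fun y => P y /\ sat g y) x
  | FGamma g h =>
      exists pi : R -> pt,
        {within `[0, 1], continuous pi} /\
        (forall s, 0 <= s <= 1 -> P (pi s)) /\
        pi 0 = x /\
        (forall s, 0 < s < 1 -> P (pi s) /\ sat g (pi s)) /\
        (P (pi 1) /\ sat h (pi 1))
  end.

(* Kripke model M(X): states are cells (nonempty simplexes of K),
   accessibility is the face relation *)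
Definition VM (p : AP) (s : {fset pt}) : Prop := relint s `<=` V p.

Definition pm_path (pi : nat -> {fset pt}) (k : nat) : Prop :=
  (2 <= k)%N /\
  (forall i, (i <= k)%N -> is_cell_of K (pi i)) /\
  face (pi 0%N) (pi 1%N) /\ face (pi k) (pi k.-1) /\
  (forall i, (i < k)%N -> face (pi i) (pi i.+1) \/ face (pi i.+1) (pi i)).

Fixpoint satM (f : slcs AP) (s : {fset pt}) : Prop :=
  match f with
  | FTop => True
  | FAtom p => VM p s
  | FNeg g => ~ satM g s
  | FAnd g h => satM g s /\ satM h s
  | FBox g => forall t, is_cell_of K t -> face s t -> satM g t
  | FGamma g h =>
      exists (pi : nat -> {fset pt}) (k : nat),
        pm_path pi k /\ pi 0%N = s /\
        (forall i, (1 <= i)%N -> (i <= k.-1)%N -> satM g (pi i)) /\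
        satM h (pi k)
  end.

End Semantics.

(* The proof is by induction on the formula; only two cases carry content.
   - Box: by the "open star" lemma, every point of a small enough
     neighbourhood of x lies in a cell having sigma as a face; conversely,
     every cell having sigma as a face has points arbitrarily close to x.
   - Gamma, Kripke to space: a +-path of cells is realised by a polygonal path
     through chosen points of the cells, each segment running from a face into
     the relative interior of a larger cell.
   - Gamma, space to Kripke: along a topological path pi witnessing
     Gamma(g, h) at x, the property "the cell of pi(u) is reached from sigma
     by a chain of comparable cells satisfying g" is locally constant on
     (0,1) (again by the open star lemma) and holds near 0, hence holds near 1
     by connectedness of intervals; the cell of pi(1) is a face of the cell
     reached near 1, which closes the +-path. *)
From mathcomp Require Import all_boot all_order all_algebra all_classical all_reals all_analysis.
From mathcomp Require Import finmap ring lra zify.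
Import numFieldNormedType.Exports.
Import Order.TTheory GRing.Theory Num.Theory Num.Def.
Set Implicit Arguments. Unset Strict Implicit. Unset Printing Implicit Defensive.
Local Open Scope classical_set_scope.
Local Open Scope ring_scope.

Section Barycentric.
Variables (R : realType) (m : nat).
Local Notation pt := 'rV[R]_m.
Implicit Types (s t W : {fset pt}) (x y z v : pt).

Definition extend0 W (l : pt -> R) : pt -> R := fun v => if v \in W then l v else 0.

Lemma sum_extend0 W s l : (W `<=` s)%fset ->
  \sum_(v <- s) extend0 W l v = \sum_(v <- W) l v.
Proof.
move=> Ws; rewrite -(big_fset_incl _ Ws); last by move=> v _ /negbTE; rewrite /extend0 => ->.
by apply: eq_fbigr => v vW _; rewrite /extend0 vW.
Qed.

Lemma sumZ_extend0 W s l : (W `<=` s)%fset ->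
  \sum_(v <- s) extend0 W l v *: v = \sum_(v <- W) l v *: v.
Proof.
move=> Ws; rewrite -(big_fset_incl _ Ws); last first.
  by move=> v _ /negbTE; rewrite /extend0 => ->; rewrite scale0r.
by apply: eq_fbigr => v vW _; rewrite /extend0 vW.
Qed.

Lemma hull_mono W s : (W `<=` s)%fset -> hull W `<=` hull s.
Proof.
move=> Ws x [l [l0 [l1 ->]]]; exists (extend0 W l); split; last split.
- by move=> v _; rewrite /extend0; case: ifP => // /l0.
- by rewrite sum_extend0.
- by rewrite sumZ_extend0.
Qed.

Lemma relint_hull s : relint s `<=` hull s.
Proof. by move=> x [l [l0 [l1 ->]]]; exists l; split=> // v /l0 /andP[/ltW]. Qed.

Lemma hull_vertex s v : v \in s -> hull s v.
Proof.
move=> vs; exists (fun w => if w == v then 1 else 0); split; last split.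
- by move=> w _; case: ifP.
- rewrite (big_fsetD1 _ vs) /= eqxx big1_fset ?addr0 // => w.
  by rewrite in_fsetD1 => /andP[/negbTE -> _].
- rewrite (big_fsetD1 _ vs) /= eqxx scale1r big1_fset ?addr0 // => w.
  by rewrite in_fsetD1 => /andP[/negbTE -> _]; rewrite scale0r.
Qed.

Lemma hull_fset1 v y : hull [fset v]%fset y -> y = v.
Proof. by move=> [l [_ [+ ->]]]; rewrite !big_seq_fset1 => ->; rewrite scale1r. Qed.

Lemma barycentric_uniq s (a b : pt -> R) : aff_indep s ->
  \sum_(v <- s) a v = 1 -> \sum_(v <- s) b v = 1 ->
  \sum_(v <- s) a v *: v = \sum_(v <- s) b v *: v ->
  forall v, v \in s -> a v = b v.
Proof.
move=> ai a1 b1 ab v vs; apply/eqP; rewrite -subr_eq0; apply/eqP.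
apply: (ai (fun w => a w - b w)) => //; first by rewrite sumrB a1 b1 subrr.
by under eq_bigr do rewrite scalerBl; rewrite sumrB ab subrr.
Qed.

Lemma coef_le_sum s (l : pt -> R) v : (forall w, w \in s -> 0 <= l w) -> v \in s ->
  l v <= \sum_(w <- s) l w.
Proof.
move=> l0 vs; rewrite (big_fsetD1 _ vs) /= lerDl big_seq sumr_ge0 // => w.
by rewrite in_fsetD1 => /andP[_ /l0].
Qed.

(* Every point of a simplex lies in the relative interior of one of its faces:
   the face spanned by the vertices with positive coordinate. *)
Lemma hull_support s x : hull s x ->
  exists W, [/\ (W `<=` s)%fset, W != fset0 & relint W x].
Proof.
move=> [l [l0 [l1 ->]]].
pose W := [fset v in s | 0 < l v]%fset.
have Ws : (W `<=` s)%fset by apply/fsubsetP => v; rewrite !inE /= => /andP[].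
have zero v : v \in s -> v \notin W -> l v = 0.
  move=> vs; rewrite !inE /= vs /= => /negbTE lv.
  by apply/eqP; rewrite eq_le l0 // andbT leNgt lv.
have sW : \sum_(v <- s) l v = \sum_(v <- W) l v.
  by rewrite (big_fset_incl _ Ws) // => v vs vW; rewrite zero.
have sZW : \sum_(v <- s) l v *: v = \sum_(v <- W) l v *: v.
  by rewrite (big_fset_incl _ Ws) // => v vs vW; rewrite zero // scale0r.
exists W; split => //.
  apply/negP => /eqP W0; move: l1; rewrite sW W0 big_seq_fset0 => /eqP.
  by rewrite eq_sym oner_eq0.
exists l; split; last by rewrite -sW -sZW.
move=> v vW; have := vW; rewrite !inE /= => /andP[vs ->] /=.
by rewrite -l1 sW coef_le_sum // => w; rewrite !inE /= => /andP[_ /ltW].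
Qed.

(* Cells are nonempty: the barycenter lies in the relative interior. *)
Lemma relint_barycenter s : s != fset0 -> exists y, relint s y.
Proof.
move=> s0; have n0 : (0 < #|` s|)%N by rewrite cardfs_gt0.
have nR : (#|` s|%:R : R) != 0 by rewrite pnatr_eq0 -lt0n.
pose c : R := (#|` s|%:R)^-1.
have sc : \sum_(v <- s) c = 1.
  rewrite (eq_bigr (fun=> 1 * c)) => [|v _]; last by rewrite mul1r.
  rewrite -mulr_suml (_ : \sum_(v <- s) (1 : R) = #|` s|%:R) ?mulfV //.
  by rewrite card_fset_sum1 natr_sum.
exists (\sum_(v <- s) c *: v), (fun=> c); split => //.
move=> v _; rewrite invr_gt0 ltr0n n0 /= invf_le1 ?ltr0n //.
by rewrite ler1n.
Qed.

Lemma relint_segment s t y z (lam : R) : (s `<=` t)%fset -> hull s y -> relint t z ->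
  0 < lam <= 1 -> relint t ((1 - lam) *: y + lam *: z).
Proof.
move=> st [a [a0 [a1 ->]]] [b [b0 [b1 ->]]] /andP[l0 l1].
pose c v := (1 - lam) * extend0 s a v + lam * b v.
have c0 v : v \in t -> 0 < c v.
  move=> vt; rewrite /c ltr_wpDl //.
    by rewrite mulr_ge0 ?subr_ge0 // /extend0; case: ifP => // /a0.
  by rewrite mulr_gt0 //; case/andP: (b0 _ vt).
have c1 : \sum_(v <- t) c v = 1.
  by rewrite big_split /= -!mulr_sumr sum_extend0 // a1 b1; ring.
exists c; split; last split => //.
  by move=> v vt; rewrite c0 //= -c1 coef_le_sum // => w /c0 /ltW.
rewrite -(sumZ_extend0 a st) !scaler_sumr -big_split /=.
by apply: eq_bigr => v _; rewrite /c [RHS]scalerDl !scalerA.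
Qed.

End Barycentric.

Section Cells.
Variables (R : realType) (m : nat).
Local Notation pt := 'rV[R]_m.
Variable K : {fset {fset pt}}.
Hypothesis SC : simplicial_complex K.
Implicit Types (s t W : {fset pt}) (x y : pt).

Lemma complex_face s t : s \in K -> (t `<=` s)%fset -> t \in K.
Proof. by case: SC => _ [+ _] => H sK ts; apply: H sK _. Qed.

Lemma hull_polyhedron s y : s \in K -> hull s y -> polyhedron K y.
Proof. by move=> sK hy; exists s. Qed.

(* If the relative interior of s meets the simplex t, then s lies inside t:
   s meets its intersection with t, a face of s, in its relative interior,
   and by uniqueness of barycentric coordinates that face is s itself. *)
Lemma relint_meet_hull s t x : s \in K -> t \in K -> relint s x -> hull t x ->
  hull s `<=` hull t.
Proof.
move=> sK tK xs xt; case: SC => ai [_ inter].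
have [W1 [W2 [W1s [_ [hW1 _]]]]] := inter s t sK tK.
have xW1 : hull W1 x by rewrite hW1; split => //; exact: relint_hull.
have sW1 : (s `<=` W1)%fset.
  case: xs => a [a0 [a1 xa]]; case: xW1 => b [b0 [b1 xb]].
  apply/fsubsetP => v vs; apply/negPn/negP => vW.
  have := barycentric_uniq (b := extend0 W1 b) (ai _ sK) a1 _ _ vs.
  rewrite /extend0 (negbTE vW) sum_extend0 // sumZ_extend0 // -xa -xb.
  by move=> /(_ b1 erefl) av; move: (a0 _ vs); rewrite av ltxx.
by move=> y /(hull_mono sW1); rewrite hW1 => -[].
Qed.

Lemma relint_uniq s t x : s \in K -> t \in K -> relint s x -> relint t x -> s = t.
Proof.
suff sub : forall s t x, s \in K -> t \in K -> relint s x -> relint t x ->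
    (s `<=` t)%fset.
  move=> sK tK xs xt; apply/eqP; rewrite eqEfsubset.
  by rewrite (sub s t x) // (sub t s x).
move=> {}s {}t {}x sK tK xs xt; apply/fsubsetP => v vs.
have vt : hull t v.
  by apply: (relint_meet_hull sK tK xs (relint_hull xt)); exact: hull_vertex.
have [t' [t't t'0 vt']] := hull_support vt.
have t'K : t' \in K := complex_face tK t't.
have vK : [fset v]%fset \in K by apply: (complex_face sK); rewrite fsub1set.
have t'v := relint_meet_hull t'K vK vt' (hull_vertex (fset11 v)).
case/fset0Pn: t'0 => w wt'.
have /hull_fset1 wv := t'v _ (hull_vertex wt').
by apply: (fsubsetP t't); rewrite -wv.
Qed.

Lemma polyhedron_cell y : polyhedron K y -> exists t, is_cell_of K t /\ relint t y.
Proof.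
case=> s sK /hull_support [W [Ws W0 yW]]; exists W; split => //.
by split => //; apply: complex_face sK Ws.
Qed.

Lemma hull_cell_face s t x : s \in K -> t \in K -> relint s x -> hull t x ->
  (s `<=` t)%fset.
Proof.
move=> sK tK xs /hull_support [W [Wt W0 xW]].
by rewrite (relint_uniq sK (complex_face tK Wt) xs xW).
Qed.

End Cells.

Section Topology.
Variables (R : realType) (m : nat).
Local Notation pt := 'rV[R]_m.
Implicit Types (s t : {fset pt}) (x y : pt).

Lemma continuous_sum (T : topologicalType) (F : numFieldType) (U : normedModType F)
    (I : Type) (r : seq I) (f : I -> T -> U) :
  (forall i, continuous (f i)) -> continuous (fun u => \sum_(i <- r) f i u).
Proof.
move=> fc; elim: r => [|a r IH].
  by under eq_fun do rewrite big_nil; exact: cst_continuous.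
under eq_fun do rewrite big_cons.
by move=> u; apply: continuousD; [exact: fc|exact: IH].
Qed.

(* A simplex is closed: it is the continuous image of the compact standard
   simplex of barycentric coordinates. *)
Lemma hull_closed s : closed (hull s).
Proof.
pose n := size (enum_fset s).
pose D := [set r : 'rV[R]_n | forall i, `[0, 1]%classic (r ord0 i)] `&`
          [set r : 'rV[R]_n | \sum_(i < n) r ord0 i = 1].
have Dc : compact D.
  apply: compact_closedI.
    apply: (@rV_compact R n (fun _ => `[(0:R), 1]%classic)) => i.
    exact: segment_compact.
  apply: (@preimage_closed _ _ (fun r : 'rV[R]_n => \sum_(i < n) r ord0 i) [set 1]).
    by move=> r _; apply: (@continuous_sum _ _ R^o) => i; exact: coord_continuous.
  exact: closed_eq.
pose g (r : 'rV[R]_n) := \sum_(i < n) r ord0 i *: nth 0 s i.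
have gc : continuous g.
  by apply: continuous_sum => i r; apply: continuousZr_tmp; exact: coord_continuous.
suff -> : hull s = g @` D.
  apply: compact_closed; first exact: norm_hausdorff.
  by apply: continuous_compact => //; exact: continuous_subspaceT.
have us : uniq (enum_fset s) := fset_uniq s.
apply/seteqP; split.
  move=> x [l [l0 [l1 ->]]]; exists (\row_(i < n) l (nth 0 s i)).
    split.
      move=> i; rewrite mxE /= in_itv /=.
      have ins : nth 0 s i \in s by rewrite mem_nth.
      by rewrite l0 //= -l1 coef_le_sum.
    by rewrite -l1 (big_nth 0) big_mkord; apply: eq_bigr => i _; rewrite mxE.
  by rewrite /g (big_nth 0) big_mkord; apply: eq_bigr => i _; rewrite mxE.
move=> _ [r [r01 r1] <-].
pose l v := oapp (fun i : 'I_n => r ord0 i) 0 (insub (index v s)).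
have lE (i : 'I_n) : l (nth 0 s i) = r ord0 i by rewrite /l index_uniq // valK.
exists l; split; last split.
- move=> v _; rewrite /l; case: insub => //= i.
  by have := r01 i; rewrite /= in_itv /= => /andP[].
- by rewrite -r1 (big_nth 0) big_mkord; apply: eq_bigr => i _; rewrite lE.
- by rewrite /g (big_nth 0) big_mkord; apply: eq_bigr => i _; rewrite lE.
Qed.

Lemma within_comp_continuous (T U W : topologicalType) (A : set T) (B : set U)
    (h : T -> U) (p : U -> W) : (forall a, A a -> B (h a)) -> continuous h ->
  {within B, continuous p} -> {within A, continuous (p \o h)}.
Proof.
move=> hAB hc /subspace_continuousP pc; apply/subspace_continuousP => a Aa.
suff hF : h @ within A (nbhs a) `=>` within B (nbhs (h a)).
  exact: (cvg_comp h p hF (pc _ (hAB _ Aa))).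
move=> Q BQ.
change (nbhs (h a) (fun u => B u -> Q u)) in BQ.
change (nbhs a (fun w => A w -> Q (h w))).
have hBQ : nbhs a (h @^-1` (fun u => B u -> Q u)) := hc a _ BQ.
by apply: (@filterS _ _ _ _ _ _ hBQ) => b /= Qb Ab; exact: Qb (hAB _ Ab).
Qed.

Lemma within_continuous_ball (T : topologicalType) (p : R -> T) (A : set R) (a : R)
    (U : set T) : {within A, continuous p} -> A a -> open U -> U (p a) ->
  exists2 e : R, 0 < e & forall b, A b -> `|a - b| < e -> U (p b).
Proof.
move=> /subspace_continuousP pc Aa oU Upa.
have /(pc _ Aa U) : nbhs (p a) U by apply: open_nbhs_nbhs.
by move=> /nbhs_ballP [e e0 He]; exists e => // b Ab ab; exact: He.
Qed.

(* The points avoiding every simplex of a finite family that x avoids form an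
   open set, since simplexes are closed. *)
Lemma avoid_open (r : seq {fset pt}) x :
  open [set y | forall t, t \in r -> ~ hull t x -> ~ hull t y].
Proof.
elim: r => [|a r IH].
  rewrite (_ : [set y | _] = setT); first exact: openT.
  by apply/seteqP; split => // y _ t; rewrite in_nil.
rewrite (_ : [set y | _] = [set y | ~ hull a x -> ~ hull a y] `&`
   [set y | forall t, t \in r -> ~ hull t x -> ~ hull t y]).
  apply: openI => //; case: (pselect (hull a x)) => hax.
    rewrite (_ : [set y | _] = setT); first exact: openT.
    by apply/seteqP; split => // y _ /(_ hax).
  rewrite (_ : [set y | _] = ~` hull a); first exact/closed_openC/hull_closed.
  by apply/seteqP; split => y /=; [move/(_ hax)|move=> ? _].
apply/seteqP; split => y /=.
  by move=> H; split => [|t tr]; apply: H; rewrite in_cons ?eqxx ?tr ?orbT.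
by move=> [H1 H2] t; rewrite in_cons => /orP[/eqP ->|]; [exact: H1|exact: H2].
Qed.

(* Every neighbourhood of a point of a face s of t meets the relative interior
   of t: move slightly from the point towards the barycenter of t. *)
Lemma relint_near_face s t x (U : set pt) : (s `<=` t)%fset -> hull s x ->
  t != fset0 -> open U -> U x -> exists y, U y /\ relint t y.
Proof.
move=> st hx t0 oU Ux; have [b bt] := relint_barycenter t0.
pose f (l : R) := x + l *: (b - x).
have fc : continuous f.
  move=> l; apply: (@continuousD R _ R (fun=> x) (fun l : R => l *: (b - x)) l).
    exact: cst_continuous.
  by apply: continuousZr_tmp; exact: cvg_id.
have f0 : U (f 0) by rewrite /f scale0r addr0.
have [e e0 He] := within_continuous_ball (continuous_subspaceT (A := setT) fc) I oU f0.
pose lam := minr (e / 2) 1.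
have lam0 : 0 < lam by rewrite lt_min ltr01 divr_gt0.
have lam1 : lam <= 1 by rewrite ge_min lexx orbT.
have lame : lam < e.
  by apply: (le_lt_trans (y := e / 2)); [rewrite ge_min lexx|lra].
exists (f lam); split; first by apply: He => //; rewrite sub0r normrN gtr0_norm.
have -> : f lam = (1 - lam) *: x + lam *: b.
  by rewrite /f scalerBl scale1r scalerBr [lam *: b - _]addrC addrA.
by apply: relint_segment st hx bt _; rewrite lam0 lam1.
Qed.

Lemma open_star (K : {fset {fset pt}}) s x : simplicial_complex K ->
  s \in K -> relint s x ->
  exists U : set pt, [/\ open U, U x &
    forall y t, U y -> t \in K -> relint t y -> (s `<=` t)%fset].
Proof.
move=> SC sK xs.
exists [set y | forall t, t \in enum_fset K -> ~ hull t x -> ~ hull t y]; split.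
- exact: avoid_open.
- by move=> t _.
move=> y t Uy tK yt; apply: (hull_cell_face SC sK tK xs).
by apply: contrapT => nh; exact: (Uy t tK nh (relint_hull yt)).
Qed.

End Topology.

Section Paths.
Variables (R : realType) (m : nat).
Local Notation pt := 'rV[R]_m.
Implicit Types (Q S : set pt) (x y z w : pt).

Lemma within_affine (p : R -> pt) (c d : R) (A : set R) :
  (forall u, A u -> 0 <= c * u + d <= 1) -> {within `[0, 1]%classic, continuous p} ->
  {within A, continuous (p \o (fun u => c * u + d))}.
Proof.
move=> cdA pc; apply: (within_comp_continuous (h := fun u => c * u + d) _ _ pc).
  by move=> u /cdA; rewrite /= in_itv.
move=> u; apply: (@continuousD R R^o R (fun u => c * u) (fun=> d)).
  by apply: (@continuousM R R (fun=> c) id); [exact: cst_continuous|exact: cvg_id].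
exact: cst_continuous.
Qed.

Definition path_via Q S y z := exists pi : R -> pt,
  [/\ {within `[0, 1]%classic, continuous pi}, pi 0 = y, pi 1 = z,
      forall u, 0 <= u <= 1 -> Q (pi u) & forall u, 0 < u < 1 -> S (pi u)].

Lemma path_via_rev Q S y z : path_via Q S y z -> path_via Q S z y.
Proof.
move=> [p [pc p0 p1 pQ pS]]; exists (p \o (fun u => -1 * u + 1)); split.
- by apply: within_affine pc => u; rewrite /= in_itv /= => /andP[? ?]; lra.
- by rewrite /= mulr0 add0r.
- by rewrite /= mulr1 addNr.
- by move=> u /andP[u0 u1]; apply: pQ; lra.
- by move=> u /andP[u0 u1]; apply: pS; lra.
Qed.

Lemma path_via_segment Q S y z :
  (forall u, 0 <= u <= 1 -> Q ((1 - u) *: y + u *: z)) ->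
  (forall u, 0 < u < 1 -> S ((1 - u) *: y + u *: z)) -> path_via Q S y z.
Proof.
move=> segQ segS; exists (fun u => (1 - u) *: y + u *: z); split => //.
- apply: continuous_subspaceT => u.
  apply: (@continuousD R _ _ (fun l : R => (1 - l) *: y) (fun l : R => l *: z)).
    apply: continuousZr_tmp; apply: (@continuousB R R^o R (fun=> 1) id).
      exact: cst_continuous.
    exact: cvg_id.
  by apply: continuousZr_tmp; exact: cvg_id.
- by rewrite subr0 scale1r scale0r addr0.
- by rewrite subrr scale0r add0r scale1r.
Qed.

Lemma itv01_halves : `[0, 1]%classic = `[0, 2^-1]%classic `|` `[2^-1, 1]%classic :> set R.
Proof.
apply/seteqP; split => u /=; rewrite !in_itv /=.
  move=> /andP[u0 u1]; case: (leP u (2^-1)) => h; [by left; rewrite u0|].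
  by right; apply/andP; split; lra.
by case=> /andP[? ?]; apply/andP; split; lra.
Qed.

Lemma path_via_cat Q S y z w : path_via Q S y z -> path_via Q S z w -> S z ->
  path_via Q S y w.
Proof.
move=> [p [pc p0 p1 pQ pS]] [q [qc q0 q1 qQ qS]] Sz.
pose c (u : R) := if u <= 2^-1 then p (2 * u + 0) else q (2 * u + -1).
have half : 2 * 2^-1 = 1 :> R by rewrite mulfV ?pnatr_eq0.
exists c; split.
- rewrite itv01_halves.
  apply: withinU_continuous; [exact: interval_closed|exact: interval_closed| |].
  + apply: (@subspace_eq_continuous _ _ _ (p \o (fun u => 2 * u + 0))).
      move=> u; rewrite in_setE /= in_itv /= => /andP[_ uh].
      by change (p (2 * u + 0) = c u); rewrite /c uh.
    by apply: within_affine pc => u; rewrite /= in_itv /= => /andP[? ?]; lra.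
  + apply: (@subspace_eq_continuous _ _ _ (q \o (fun u => 2 * u + -1))).
      move=> u; rewrite in_setE /= in_itv /= => /andP[u0 u1].
      change (q (2 * u + -1) = c u); rewrite /c.
      case: ifP => // uh; have -> : u = 2^-1 by apply/eqP; rewrite eq_le uh u0.
      by rewrite half addr0 addrN p1 q0.
    by apply: within_affine qc => u; rewrite /= in_itv /= => /andP[? ?]; lra.
- by rewrite /c invr_ge0 ler0n mulr0 addr0.
- rewrite /c ifF; last by apply/negbTE; rewrite -ltNge; lra.
  by have -> : (2 : R) * 1 + -1 = 1 by lra.
- move=> u /andP[u0 u1]; rewrite /c; case: ifP => uh.
    by apply: pQ; lra.
  by apply: qQ; move/negbT: uh; rewrite -ltNge => uh; lra.
- move=> u /andP[u0 u1]; rewrite /c; case: ifP => uh.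
    have [->|uh'] := eqVneq u (2^-1); first by rewrite half addr0 p1.
    have : u < 2^-1 by rewrite lt_neqAle uh' uh.
    by move=> ?; apply: pS; lra.
  by apply: qS; move/negbT: uh; rewrite -ltNge => uh; lra.
Qed.

End Paths.

(* A property of reals that is locally constant on [a, t] and holds at a holds
   at t (connectedness of intervals, via the intermediate value theorem
   applied to its indicator function). *)
Lemma locally_constant_itv (R : realType) (G : R -> Prop) (a t : R) : a <= t ->
  (forall c, a <= c <= t -> exists2 e : R, 0 < e &
     forall b, a <= b <= t -> `|c - b| < e -> (G c <-> G b)) ->
  G a -> G t.
Proof.
move=> at' loc Ga; apply: contrapT => nGt.
pose f u : R := if pselect (G u) then 1 else 0.
have fc : {within `[a, t]%classic, continuous f}.
  apply/subspace_continuousP => c; rewrite /= in_itv /= => act.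
  have [e e0 He] := loc c act.
  have fE : {near within `[a, t]%classic (nbhs c), (fun=> f c) =1 f}.
    change (nbhs c (fun b => `[a, t]%classic b -> f c = f b)).
    apply/nbhs_ballP; exists e => // b cb; rewrite /= in_itv /= => abt.
    have := He b abt cb; rewrite /f.
    by case: pselect => Gc; case: pselect => Gb // [Gcb Gbc]; [case: Gb|case: Gc]; auto.
  by apply: (cvg_trans (near_eq_cvg fE)); exact: cvg_cst.
have fa : f a = 1 by rewrite /f; case: pselect.
have ft : f t = 0 by rewrite /f; case: pselect.
have := IVT (v := 2^-1) at' fc; rewrite fa ft => -[|c _].
  by rewrite min_r ?max_l ?ler01 //; apply/andP; split; lra.
by rewrite /f; case: (pselect (G c)) => ? /=; lra.
Qed.

Section Realisation.
Variables (R : realType) (m : nat).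
Local Notation pt := 'rV[R]_m.
Variable K : {fset {fset pt}}.
Local Notation P := (polyhedron K).
Implicit Types (S : set pt) (s t : {fset pt}) (x y z : pt).

Lemma face_segment_path S s t y z : t \in K -> (s `<=` t)%fset -> hull s y ->
  relint t z -> relint t `<=` S -> path_via P S y z.
Proof.
move=> tK st ys zt tS.
have mid u : 0 < u <= 1 -> relint t ((1 - u) *: y + u *: z).
  exact: relint_segment st ys zt.
apply: path_via_segment => u /andP[u0 u1].
  have [->|u0'] := eqVneq u 0.
    by rewrite subr0 scale1r scale0r addr0; exists t => //; exact: (hull_mono st).
  by exists t => //; apply/relint_hull/mid; rewrite u1 andbT lt_neqAle eq_sym u0'.
by apply/tS/mid; rewrite u0 ltW.
Qed.

(* It joins chosen points of
   consecutive cells by face segments. *)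
Lemma pm_path_realise S pi k x : pm_path K pi k -> relint (pi 0%N) x ->
  (forall i, (1 <= i)%N -> (i <= k.-1)%N -> relint (pi i) `<=` S) ->
  exists y, relint (pi k) y /\ path_via P S x y.
Proof.
move=> [k2 [cells [f01 [fk ful]]]] x0 piS.
have [f fP] : {f : nat -> pt & forall i, (i <= k)%N -> relint (pi i) (f i)}.
  apply: (@boolp.choice _ _ (fun i y => (i <= k)%N -> relint (pi i) y)) => i.
  case: (leqP i k) => ik; last by exists 0 => ik'; lia.
  by have [y yi] := relint_barycenter (cells i ik).2; exists y.
pose pt_of i := if i == 0%N then x else f i.
have ptP i : (i <= k)%N -> relint (pi i) (pt_of i).
  by move=> ik; rewrite /pt_of; case: eqP => [->|_]; [exact: x0|exact: fP].
have ptS j : (1 <= j)%N -> (j <= k.-1)%N -> S (pt_of j).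
  by move=> j1 jk; apply: (piS j) => //; apply: ptP; lia.
have step i j : (i <= k)%N -> (1 <= j)%N -> (j <= k.-1)%N ->
    (pi i `<=` pi j)%fset -> path_via P S (pt_of i) (pt_of j).
  move=> ik j1 jk ij; apply: (face_segment_path (cells j _).1 ij) => //; try lia.
  - exact: relint_hull (ptP i ik).
  - by apply: ptP; lia.
  - exact: piS.
have toj j : (1 <= j)%N -> (j <= k.-1)%N -> path_via P S x (pt_of j).
  elim: j => [//|j IH] j1 jk.
  have [->|j0] := eqVneq j 0%N.
    by have := step 0%N 1%N ltac:(lia) isT ltac:(lia) f01; rewrite /pt_of eqxx.
  apply: (path_via_cat (IH ltac:(lia) ltac:(lia))); last by apply: ptS; lia.
  case: (ful j ltac:(lia)) => hj; first by apply: step => //; lia.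
  by apply: path_via_rev; apply: step => //; lia.
exists (pt_of k); split; first exact: ptP.
apply: (path_via_cat (toj k.-1 ltac:(lia) (leqnn _))); last by apply: ptS; lia.
by apply/path_via_rev/step => //; lia.
Qed.

End Realisation.

Section Semantics.
Variables (R : realType) (m : nat) (AP : finType).
Local Notation pt := 'rV[R]_m.
Variables (K : {fset {fset pt}}) (V : AP -> set pt).
Hypothesis SC : simplicial_complex K.
Hypothesis coh : coherent K V.
Local Notation P := (polyhedron K).
Implicit Types (s t : {fset pt}) (x y : pt).

Definition sat_agree (f : slcs AP) := forall x s,
  is_cell_of K s -> relint s x -> (sat K V f x <-> satM K V f s).

Lemma gamma_realise g h : sat_agree g -> sat_agree h -> forall x s,
  is_cell_of K s -> relint s x -> satM K V (FGamma g h) s -> sat K V (FGamma g h) x.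
Proof.
move=> IHg IHh x s cs xs [pi [k [pmk [pi0 [pig pih]]]]].
have [cells _] := pmk.2.
pose S y := P y /\ sat K V g y.
have piS i : (1 <= i)%N -> (i <= k.-1)%N -> relint (pi i) `<=` S.
  move=> i1 ik y yi; have ci := cells i ltac:(lia).
  split; first exact: hull_polyhedron ci.1 (relint_hull yi).
  by apply/(IHg y (pi i) ci yi); exact: pig.
have x0 : relint (pi 0%N) x by rewrite pi0.
have [y [yk [q [qc q0 q1 qP qS]]]] := pm_path_realise pmk x0 piS.
exists q; do 4!split => //; rewrite q1; split.
  exact: hull_polyhedron (cells k (leqnn _)).1 (relint_hull yk).
by apply/(IHh _ _ (cells k (leqnn _)) yk).
Qed.

Definition phi_chain g s (rho : nat -> {fset pt}) j :=
  [/\ (1 <= j)%N, rho 0%N = s /\ (rho 0%N `<=` rho 1%N)%fset,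
      (forall i, (i <= j)%N -> is_cell_of K (rho i)),
      (forall i, (i < j)%N -> (rho i `<=` rho i.+1)%fset \/ (rho i.+1 `<=` rho i)%fset) &
      (forall i, (1 <= i)%N -> (i <= j)%N -> satM K V g (rho i))].

Lemma phi_chain_snoc g s rho j t : phi_chain g s rho j -> is_cell_of K t ->
  (rho j `<=` t)%fset \/ (t `<=` rho j)%fset -> satM K V g t ->
  phi_chain g s (fun i => if (i <= j)%N then rho i else t) j.+1.
Proof.
move=> [j1 [r0 r01] rc rcmp rg] ct cmp gt; split => //.
- by rewrite leq0n j1.
- by move=> i ij; case: ifP => // /rc.
- move=> i; rewrite ltnS => ij; rewrite ij.
  by case: (ltngtP i j) => [/rcmp|jlti|->] //; lia.
- by move=> i i1 ij; case: ifP => // /(rg _ i1).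
Qed.

Lemma phi_chain_close g h s rho j t : phi_chain g s rho j -> is_cell_of K t ->
  (t `<=` rho j)%fset -> satM K V h t -> satM K V (FGamma g h) s.
Proof.
move=> [j1 [r0 r01] rc rcmp rg] ct tj ht.
exists (fun i => if (i <= j)%N then rho i else t), j.+1; split; last split.
- split; first by lia.
  split; first by move=> i ij; case: ifP => // /rc.
  split; first by rewrite leq0n j1.
  split; first by rewrite ltnn /= leqnn.
  move=> i; rewrite ltnS => ij; rewrite ij.
  by case: (ltngtP i j) => [/rcmp|jlti|->] //; [lia|right].
- by rewrite leq0n.
- split; first by move=> i i1 ij /=; rewrite ij; exact: rg.
  by rewrite ltnn.
Qed.

Lemma cell_stable_near (pi : R -> pt) (t : R) tau :
  {within `[0, 1]%classic, continuous pi} -> 0 <= t <= 1 ->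
  is_cell_of K tau -> relint tau (pi t) ->
  exists2 e : R, 0 < e & forall b, 0 <= b <= 1 -> `|t - b| < e ->
    forall t', t' \in K -> relint t' (pi b) -> (tau `<=` t')%fset.
Proof.
move=> pc t01 ct pt'.
have [U [oU Ut HU]] := open_star SC ct.1 pt'.
have tA : `[0, 1]%classic t by rewrite /= in_itv /=.
have [e e0 He] := within_continuous_ball pc tA oU Ut.
exists e => // b b01 tb t' t'K rb; apply: (HU (pi b)) => //.
by apply: He => //; rewrite /= in_itv /=.
Qed.

Section Forward.
Variables (g : slcs AP) (s : {fset pt}) (pi : R -> pt).
Hypothesis IHg : sat_agree g.
Hypothesis pi_cont : {within `[0, 1]%classic, continuous pi}.
Hypothesis pi_P : forall u, 0 <= u <= 1 -> P (pi u).
Hypothesis pi_g : forall u, 0 < u < 1 -> sat K V g (pi u).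
Hypothesis cs : is_cell_of K s.
Hypothesis pi0 : relint s (pi 0).

Definition reachable u :=
  exists rho j, phi_chain g s rho j /\ relint (rho j) (pi u).

Lemma cell_on_path u : 0 <= u <= 1 -> exists t, is_cell_of K t /\ relint t (pi u).
Proof. by move=> u01; apply: (polyhedron_cell SC); exact: pi_P. Qed.

Lemma cell_on_path_g u t : 0 < u < 1 -> is_cell_of K t -> relint t (pi u) ->
  satM K V g t.
Proof. by move=> u01 ct tu; apply: (IHg ct tu).1; exact: pi_g. Qed.

Lemma reachable_step u b tb : reachable u -> is_cell_of K tb -> relint tb (pi b) ->
  (forall t, t \in K -> relint t (pi u) ->
     (t `<=` tb)%fset \/ (tb `<=` t)%fset) ->
  satM K V g tb -> reachable b.
Proof.
move=> [rho [j [ch rj]]] ctb tbb cmp gtb.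
have rjK : rho j \in K by case: ch => _ _ /(_ j (leqnn _)) [].
exists (fun i => if (i <= j)%N then rho i else tb), j.+1; split; last by rewrite ltnn.
exact: phi_chain_snoc ch ctb (cmp _ rjK rj) gtb.
Qed.

Lemma reachable_local u : 0 < u < 1 -> exists2 e : R, 0 < e &
  forall b, 0 < b < 1 -> `|u - b| < e -> (reachable u <-> reachable b).
Proof.
move=> /andP[u0 u1].
have [tu [ctu rtu]] := cell_on_path (ltac:(apply/andP; split; lra) : 0 <= u <= 1).
have [e e0 He] := cell_stable_near (t := u) pi_cont ltac:(apply/andP; split; lra) ctu rtu.
exists e => // b /andP[b0 b1] ub.
have [tb [ctb rtb]] := cell_on_path (ltac:(apply/andP; split; lra) : 0 <= b <= 1).
have tub := He b ltac:(apply/andP; split; lra) ub tb ctb.1 rtb.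
split => [Ru|Rb].
  apply: (reachable_step Ru ctb rtb) => [t tK rtu'|].
    by left; rewrite (relint_uniq SC tK ctu.1 rtu' rtu).
  by apply: (cell_on_path_g _ ctb rtb); apply/andP.
apply: (reachable_step Rb ctu rtu) => [t tK tb'|].
  by right; rewrite (relint_uniq SC tK ctb.1 tb' rtb).
by apply: (cell_on_path_g _ ctu rtu); apply/andP.
Qed.

(* Near 0, the cell of pi(b) has s as a face: a chain of length one. *)
Lemma reachable_start : exists2 e : R, 0 < e &
  forall b, 0 < b < 1 -> b < e -> reachable b.
Proof.
have [e e0 He] := cell_stable_near (t := 0) pi_cont ltac:(apply/andP; split; lra) cs pi0.
exists e => // b /andP[b0 b1] be.
have b01 : 0 <= b <= 1 by apply/andP; split; lra.
have [tb [ctb rtb]] := cell_on_path b01.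
have sb := He b b01 ltac:(by rewrite sub0r normrN gtr0_norm) tb ctb.1 rtb.
exists (fun i => if i == 0%N then s else tb), 1%N; split => //; split => //.
- by move=> i; case: eqP.
- by move=> i; rewrite ltnS leqn0 => /eqP ->; left.
- move=> i i1 i1'; have -> : i = 1%N by lia.
  by apply: (cell_on_path_g _ ctb rtb); apply/andP.
Qed.

Lemma reachable_inner u : 0 < u < 1 -> reachable u.
Proof.
move=> /andP[u0 u1]; have [e0 e00 start] := reachable_start.
pose a := minr (e0 / 2) (u / 2).
have a0 : 0 < a by rewrite lt_min !divr_gt0.
have au : a < u by rewrite gt_min; apply/orP; right; lra.
have ae : a < e0 by rewrite gt_min; apply/orP; left; lra.
apply: (locally_constant_itv (ltW au)); last by apply: start => //; apply/andP; split; lra.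
move=> c /andP[ac cu]; have c01 : 0 < c < 1 by apply/andP; split; lra.
have [e e0' He] := reachable_local c01.
by exists e => // b /andP[ab bu]; apply: He; apply/andP; split; lra.
Qed.

End Forward.

Lemma gamma_discretise g h : sat_agree g -> sat_agree h -> forall x s,
  is_cell_of K s -> relint s x -> sat K V (FGamma g h) x -> satM K V (FGamma g h) s.
Proof.
move=> IHg IHh x s cs xs [pi [pc [pP [pi0 [pg [p1P p1h]]]]]].
have pg' u : 0 < u < 1 -> sat K V g (pi u) by move=> /pg [].
have pi0s : relint s (pi 0) by rewrite pi0.
have [tend [ctend rtend]] := polyhedron_cell SC p1P.
have [e1 e10 He1] := cell_stable_near (t := 1) pc ltac:(apply/andP; split; lra) ctend rtend.
pose b := maxr (2^-1) (1 - e1 / 2).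
have b0 : 0 < b by rewrite lt_max; apply/orP; left; lra.
have b1 : b < 1 by rewrite gt_max; apply/andP; split; lra.
have be : `|1 - b| < e1.
  have : 1 - e1 / 2 <= b by rewrite le_max lexx orbT.
  by rewrite gtr0_norm; lra.
have b01 : 0 < b < 1 by rewrite b0 b1.
have [rho [j [ch rj]]] := reachable_inner IHg pc pP pg' cs pi0s b01.
have rjK : rho j \in K by case: ch => _ _ /(_ j (leqnn _)) [].
have tb := He1 b ltac:(apply/andP; split; lra) be (rho j) rjK rj.
by apply: (phi_chain_close ch ctend tb); apply/(IHh _ _ ctend rtend).
Qed.

(* Atoms: valuations are unions of cells, and cells are disjoint. *)
Lemma atom_agree p : sat_agree (FAtom p).
Proof.
move=> x s cs xs /=; split; last by apply.
case: (coh p) => C [CK Ve]; rewrite Ve => -[s0 C0 x0] y ys.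
have s0s : s0 = s := relint_uniq SC (CK _ C0).1 cs.1 x0 xs.
by rewrite Ve; exists s0; rewrite // s0s.
Qed.

(* Box: neighbourhoods of x meet exactly the cells having s as a face. *)
Lemma box_agree g : sat_agree g -> sat_agree (FBox g).
Proof.
move=> IHg x s cs xs /=; split.
  move=> [U [oU [Ux UP]]] t ct st.
  have [y [Uy yt]] := relint_near_face st (relint_hull xs) ct.2 oU Ux.
  have [_ gy] := UP y (conj Uy (hull_polyhedron ct.1 (relint_hull yt))).
  exact: (IHg y t ct yt).1.
move=> gs; have [U [oU Ux Ustar]] := open_star SC cs.1 xs.
exists U; split => //; split => // y [Uy Py].
have [t [ct yt]] := polyhedron_cell SC Py.
split => //; apply: (IHg y t ct yt).2; apply: gs => //.
exact: (Ustar y t Uy ct.1 yt).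
Qed.

Lemma all_agree f : sat_agree f.
Proof.
elim: f => [|p|g IHg|g IHg h IHh|g IHg|g IHg h IHh].
- by [].
- exact: atom_agree.
- by move=> x s cs xs /=; rewrite (IHg x s cs xs).
- by move=> x s cs xs /=; rewrite (IHg x s cs xs) (IHh x s cs xs).
- exact: box_agree.
- by move=> x s cs xs; split; [exact: gamma_discretise|exact: gamma_realise].
Qed.

End Semantics.

Theorem mainTheorem12 (R : realType) (m : nat) (AP : finType)
    (K : {fset {fset 'rV[R]_m}}) (V : AP -> set 'rV[R]_m) :
  simplicial_complex K -> coherent K V ->
  forall (x : 'rV[R]_m) (sigma : {fset 'rV[R]_m}),
    is_cell_of K sigma -> relint sigma x ->
    forall phi : slcs AP, sat K V phi x <-> satM K V phi sigma.
Proof.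
by move=> SC coh x sigma cs xs phi; exact: (all_agree SC coh phi cs xs).
Qed.
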